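(* Let $\lambda$ be an infinite cardinal and $\chi$ either $2$ or an infinite cardinal, with $\chi<\lambda$. For every $S\in J_\chi[\lambda^+]$, the set $S\cap E^{\lambda^+}_{\mathrm{cf}(\lambda)}$ is nonstationary.
   Context: $E^\kappa_\theta=\{\alpha<\kappa\mid\mathrm{cf}(\alpha)=\theta\}$. For regular uncountable $\kappa$, $J_\chi[\kappa]$ is the collection of all $S\subseteq\kappa$ for which there exist a club $C\subseteq\kappa$ and functions $f_i:\kappa\to[\kappa]^{<\chi}$ ($i<\kappa$) such that for every $\alpha\in S\cap C$, every regressive $f:\alpha\to\alpha$ and every cofinal $B\subseteq\alpha$, there is $i<\alpha$ with $\sup\{\beta\in B\mid f(\beta)\in f_i(\beta)\}=\alpha$. *)

(* Ordinals below kappa = lambda^+ are modelled as elements of a type K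
   carrying a strict well-order [lt]; cardinals are compared via injections
   between (sub)types. *)

Set Implicit Arguments.

Section Defs.
Variable K : Type.
Variable lt : K -> K -> Prop.

Definition strict_well_order : Prop :=
  (forall x, ~ lt x x) /\
  (forall x y z, lt x y -> lt y z -> lt x z) /\
  (forall x y, lt x y \/ x = y \/ lt y x) /\
  well_founded lt.

(* the initial segment {x | x < a}, i.e. the ordinal a *)
Definition below (a : K) : K -> Prop := fun x => lt x a.

End Defs.

Definition injects (A B : Type) : Prop :=
  exists f : A -> B, forall x y, f x = f y -> x = y.

Definition equinum (A B : Type) : Prop :=
  exists f : A -> B, (forall x y, f x = f y -> x = y) /\ (forall y, exists x, f x = y).

Definition card_lt (A B : Type) : Prop := injects A B /\ ~ injects B A.

Definition infinite_type (A : Type) : Prop := injects nat A.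

Section Ord.
Variable K : Type.
Variable lt : K -> K -> Prop.

Definition sup_eq (X : K -> Prop) (a : K) : Prop :=
  (forall b, X b -> lt b a) /\ (forall d, lt d a -> exists b, X b /\ lt d b).

Definition cofinal_in (X : K -> Prop) (a : K) : Prop :=
  (forall b, X b -> lt b a) /\ (forall d, lt d a -> exists b, X b /\ (d = b \/ lt d b)).

(* cf(a) = cf(b): the least cardinalities of cofinal subsets of a and of b coincide *)
Definition cf_eq (a b : K) : Prop :=
  exists X Y : K -> Prop,
    cofinal_in X a /\ cofinal_in Y b /\
    (forall X', cofinal_in X' a -> injects {x | X x} {x | X' x}) /\
    (forall Y', cofinal_in Y' b -> injects {y | Y y} {y | Y' y}) /\
    equinum {x | X x} {y | Y y}.

Definition E_cf (l : K) : K -> Prop := fun a => cf_eq a l.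

(* club subsets of kappa (kappa = the whole type K) *)
Definition club (C : K -> Prop) : Prop :=
  (forall d, exists b, C b /\ lt d b) /\
  (forall a, (exists g, lt g a) -> sup_eq (fun b => C b /\ lt b a) a -> C a).

Definition nonstationary (T : K -> Prop) : Prop :=
  exists C, club C /\ forall a, ~ (C a /\ T a).

Definition regressive (a : K) (f : K -> K) : Prop :=
  (forall b, lt b a -> lt (f b) a) /\
  (forall b, lt b a -> (exists g, lt g b) -> lt (f b) b).

(* S \in J_chi[kappa], with chi the cardinality of the type Chi *)
Definition in_J (Chi : Type) (S : K -> Prop) : Prop :=
  exists (C : K -> Prop) (F : K -> K -> (K -> Prop)),
    club C /\
    (forall i b, card_lt {x | F i b x} Chi) /\
    (forall a, S a -> C a ->
       forall f, regressive a f ->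
       forall B : K -> Prop, sup_eq B a ->
       exists i, lt i a /\ sup_eq (fun b => B b /\ F i b (f b)) a).

End Ord.

From mathcomp Require Import all_boot all_classical.
From Stdlib Require Import Wellfounded.

(* Suppose a > lam, with cf(a) = cf(lam) = theta, satisfies the J-condition for
   the sets F i. Fix cofinal sets X of a and Y of lam of size theta, a bijection q : X -> Y, an injection k of X
   into theta and an injection e of a into lam. Call i < a early for x in X when
   e(i) <= q(x') for some x' with k(x') < k(x). Fewer than cf(lam) elements
   precede x, so their q-values are bounded by some d < lam; the sets F i x for
   early i are therefore indexed by d and have size < chi, so their union has
   size at most |d| * chi < lam and some z < lam <= x avoids them all: set
   f(x) := z. Any i < a is early for every x that follows, in the k-order, an x0
   with e(i) <= q(x0); hence {b | f(b) in F i b} is contained in a k-initial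
   segment of X, which has size < theta and cannot be cofinal in a. The bound
   |d| * chi < lam rests on Hessenberg's theorem kappa * kappa = kappa, obtained
   by collapsing Goedel's well-ordering of kappa x kappa into K. *)

Set Implicit Arguments.
Unset Strict Implicit.

Lemma sig_val_inj (A : Type) (P : A -> Prop) (u v : {x | P x}) :
  proj1_sig u = proj1_sig v -> u = v.
Proof. by case: u v => x px [y py] /= xy; apply: eq_exist. Qed.

Lemma injects_trans (A B C : Type) : injects A B -> injects B C -> injects A C.
Proof. by move=> [f f_inj] [g g_inj]; exists (g \o f) => x y /g_inj /f_inj. Qed.

Lemma injects_prod (A A' B B' : Type) :
  injects A A' -> injects B B' -> injects (A * B) (A' * B').
Proof.
move=> [f f_inj] [g g_inj]; exists (fun p => (f p.1, g p.2)).
by move=> [x y] [x' y'] [/f_inj -> /g_inj ->].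
Qed.

Lemma injects_sig (A B : Type) (P : A -> Prop) (Q : B -> Prop) (g : A -> B) :
  (forall x, P x -> Q (g x)) -> (forall x y, P x -> P y -> g x = g y -> x = y) ->
  injects {x | P x} {y | Q y}.
Proof.
move=> PQ g_inj; exists (fun u => exist Q (g (proj1_sig u)) (PQ _ (proj2_sig u))).
move=> [x px] [y py] /(f_equal (@proj1_sig _ _)) /= /(g_inj _ _ px py) xy.
exact: eq_exist.
Qed.

Lemma injects_sub (A : Type) (P Q : A -> Prop) :
  (forall x, P x -> Q x) -> injects {x | P x} {x | Q x}.
Proof. by move=> PQ; apply: (injects_sig (g := id)). Qed.

Lemma injects_val (A : Type) (P : A -> Prop) : injects {x | P x} A.
Proof. by exists (@proj1_sig _ _); apply: sig_val_inj. Qed.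

Lemma injects_of_onto (A B : Type) (P : A -> Prop) (Q : B -> Prop) (g : A -> B) :
  (forall y, Q y -> exists x, P x /\ g x = y) -> injects {y | Q y} {x | P x}.
Proof.
move=> onto; have pick (v : {y | Q y}) : {x | P x /\ g x = proj1_sig v}.
  by apply: cid; apply: onto (proj2_sig v).
exists (fun v => exist P _ (proj1 (proj2_sig (pick v)))) => v w.
move=> /(f_equal (@proj1_sig _ _)) /= vw; apply: sig_val_inj.
by rewrite -(proj2 (proj2_sig (pick v))) -(proj2 (proj2_sig (pick w))) vw.
Qed.

Lemma sig_fun_extension (A B : Type) (b0 : B) (P : A -> Prop) (f : {x | P x} -> B) :
  exists g : A -> B, forall x (px : P x), g x = f (exist P x px).
Proof.
exists (fun x => if pselect (P x) is left px then f (exist P x px) else b0).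
by move=> x px; case: pselect => [px'|/(_ px) //]; rewrite (Prop_irrelevance px' px).
Qed.

Lemma injects_sigP (A B : Type) (b0 : B) (P : A -> Prop) (Q : B -> Prop) :
  injects {x | P x} {y | Q y} ->
  exists g : A -> B, (forall x, P x -> Q (g x)) /\
    (forall x y, P x -> P y -> g x = g y -> x = y).
Proof.
move=> [f f_inj]; have [g gE] := sig_fun_extension b0 (fun u => proj1_sig (f u)).
exists g; split=> [x px|x y px py]; first by rewrite (gE x px); apply: proj2_sig.
by rewrite (gE x px) (gE y py) => /sig_val_inj /f_inj /(f_equal (@proj1_sig _ _)).
Qed.

Lemma equinum_sigP (A B : Type) (b0 : B) (P : A -> Prop) (Q : B -> Prop) :
  equinum {x | P x} {y | Q y} ->
  exists g : A -> B, [/\ forall x, P x -> Q (g x),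
    forall x y, P x -> P y -> g x = g y -> x = y &
    forall y, Q y -> exists x, P x /\ g x = y].
Proof.
move=> [f [f_inj f_onto]]; have [g gE] := sig_fun_extension b0 (fun u => proj1_sig (f u)).
exists g; split=> [x px|x y px py|y qy].
- by rewrite (gE x px); apply: proj2_sig.
- by rewrite (gE x px) (gE y py) => /sig_val_inj /f_inj /(f_equal (@proj1_sig _ _)).
- have [[x px] fx] := f_onto (exist Q y qy).
  by exists x; rewrite (gE x px) fx.
Qed.

Local Open Scope classical_set_scope.

Lemma infinite_typeE (T : Type) : infinite_type T <-> infinite_set [set: T].
Proof.
split=> [[g g_inj] fin|/infiniteP/card_leP[f]].
  pose h (t : T) := if pselect (exists n, g n = t) is left e then projT1 (cid e) else 0%N.
  have hg n : h (g n) = n.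
    rewrite /h; case: pselect => [e|/(_ (ex_intro _ n erefl)) //].
    by case: (cid e) => m /= /g_inj.
  apply: infinite_nat; apply: sub_finite_set (finite_image h fin).
  by move=> n _; exists (g n).
exists (fun n => val (f (exist _ n (mem_set I)))).
move=> x y /val_inj /(@inj _ _ _ f); move/(_ (mem_set I) (mem_set I)).
by case.
Qed.

Lemma infinite_prod (A B : Type) :
  infinite_type (A * B) -> infinite_type A \/ infinite_type B.
Proof.
rewrite !infinite_typeE -setXTT => infAB; apply: contrapT => /not_orP[finA finB].
by apply: infAB; apply: finite_setX; apply: contrapT.
Qed.

Lemma infinite_option (A : Type) : infinite_type (option A) -> infinite_type A.
Proof.
rewrite !infinite_typeE => infA; apply: contrapT => /contrapT finA; apply: infA.
have -> : [set: option A] = [set None] `|` Some @` [set: A].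
  by apply/seteqP; split=> [[x|]|//] _; [right; exists x|left].
by rewrite finite_setU; split; [exact: finite_set1|exact: finite_image].
Qed.

Lemma injects_option (A : Type) : infinite_type A -> injects (option A) A.
Proof.
move=> [g g_inj].
pose shift a := if pselect (exists n, g n = a) is left e then g (projT1 (cid e)).+1 else a.
have shiftP a : (exists n, a = g n /\ shift a = g n.+1) \/
                ((forall n, g n <> a) /\ shift a = a).
  rewrite /shift; case: pselect => [e|ne]; last by right; split=> // n gn; apply: ne; exists n.
  by left; case: (cid e) => n /= <-; exists n.
exists (fun o => if o is Some a then shift a else g 0) => [[a|] [b|]] /=.
- case: (shiftP a) (shiftP b) => [[n [-> ->]]|[na ->]] [[m [-> ->]]|[nb ->]].
  + by move/g_inj => [->].
  + by move/nb.
  + by move/esym/na.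
  + by move->.
- by case: (shiftP a) => [[n [_ ->]] /g_inj|[na ->] /esym /na].
- by case: (shiftP b) => [[n [_ ->]] /g_inj|[nb ->] /nb].
- by [].
Qed.

Section WellOrder.
Variables (K : Type) (lt : K -> K -> Prop).
Hypothesis lt_wo : strict_well_order lt.

Local Notation ord m := {x | below lt m x}.

Lemma lt_irrefl x : ~ lt x x.
Proof. by case: lt_wo. Qed.

Lemma lt_trans x y z : lt x y -> lt y z -> lt x z.
Proof. by case: lt_wo => _ [lt_tr _]; apply: lt_tr. Qed.

Lemma lt_total x y : lt x y \/ x = y \/ lt y x.
Proof. by case: lt_wo => _ [_ []]. Qed.

Lemma lt_wf : well_founded lt.
Proof. by case: lt_wo => _ [_ []]. Qed.

Definition lte x y := x = y \/ lt x y.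

Lemma lte_trans x y z : lte x y -> lte y z -> lte x z.
Proof. by move=> [->|xy] [<-|yz]; [left|right|right|right; apply: lt_trans xy yz]. Qed.

Lemma lte_lt_trans x y z : lte x y -> lt y z -> lt x z.
Proof. by move=> [->|xy] // yz; apply: lt_trans xy yz. Qed.

Lemma lt_lte_trans x y z : lt x y -> lte y z -> lt x z.
Proof. by move=> xy [<-|yz] //; apply: lt_trans xy yz. Qed.

Lemma lteNlt x y : ~ lt x y -> lte y x.
Proof. by move=> xy; case: (lt_total x y) => [//|[->|]]; [left|right]. Qed.

Definition maxo x y := if pselect (lt x y) then y else x.

Lemma maxo_cases x y : maxo x y = x \/ maxo x y = y.
Proof. by rewrite /maxo; case: pselect; [right|left]. Qed.

Lemma lte_maxl x y : lte x (maxo x y).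
Proof. by rewrite /maxo; case: pselect => [xy|nxy]; [right|left]. Qed.

Lemma lte_maxr x y : lte y (maxo x y).
Proof. by rewrite /maxo; case: pselect => [xy|/lteNlt //]; left. Qed.

Lemma maxo_lt x y z : lt x z -> lt y z -> lt (maxo x y) z.
Proof. by move=> xz yz; case: (maxo_cases x y) => ->. Qed.

Lemma wf_least (P : K -> Prop) :
  (exists z, P z) -> exists z, P z /\ forall z', lt z' z -> ~ P z'.
Proof.
move=> [z pz]; apply: contrapT => nomin; elim/(well_founded_induction lt_wf): z pz.
by move=> z IH pz; apply: nomin; exists z; split=> // z' z'z /(IH _ z'z).
Qed.

Definition is_cardinal m := forall b, lt b m -> ~ injects (ord m) (ord b).

Lemma cardinal_limit m : infinite_type (ord m) -> is_cardinal m ->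
  forall y, lt y m -> exists z, lt y z /\ lt z m.
Proof.
move=> infm cardm y ym; apply: contrapT => noz; apply: (cardm y ym).
have to_opt : injects (ord m) (option (ord y)).
  exists (fun u => if pselect (lt (proj1_sig u) y) is left uy
                   then Some (exist (below lt y) _ uy) else None) => u v.
  case: pselect => [uy|uy]; case: pselect => [vy|vy] //.
    by move=> [/sig_val_inj].
  move=> _.
  have top (w : ord m) : below lt m (proj1_sig w) -> ~ lt (proj1_sig w) y -> proj1_sig w = y.
    by move=> wm /lteNlt [//|yw]; case: noz; exists (proj1_sig w).
  by apply: sig_val_inj; rewrite (top u (proj2_sig u) uy) (top v (proj2_sig v) vy).
have infy := infinite_option (injects_trans infm to_opt).
exact: injects_trans to_opt (injects_option infy).
Qed.

(** * Collapsing well-founded relations into K *)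

Section Collapse.
Variables (W : Type) (R : W -> W -> Prop) (m : K).
Hypotheses (R_wf : well_founded R) (R_trans : forall u v w, R u v -> R v w -> R u w).
Hypothesis small_segments : forall w, ~ injects (ord m) {v | R v w}.

Definition fresh_for w (rec : forall v, R v w -> K) z :=
  (~ exists v (h : R v w), rec v h = z) /\
  forall z', lt z' z -> exists v (h : R v w), rec v h = z'.

Definition collapse_step w (rec : forall v, R v w -> K) :=
  if pselect (exists z, fresh_for rec z) is left e then proj1_sig (cid e) else m.

Definition collapse : W -> K := Fix R_wf (fun _ => K) collapse_step.

Lemma collapse_eq w : collapse w = @collapse_step w (fun v _ => collapse v).
Proof.
apply: Fix_eq => v f g fg; congr collapse_step.
by apply: functional_extensionality_dep => u; apply: functional_extensionality_dep.
Qed.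

Lemma collapse_spec w : lt (collapse w) m /\
  (~ exists v, R v w /\ collapse v = collapse w) /\
  (forall z, lt z (collapse w) -> exists v, R v w /\ collapse v = z).
Proof.
pose out z := ~ exists v, R v w /\ collapse v = z.
have [z0 [z0m z0out]] : exists z, lt z m /\ out z.
  apply: contrapT => all_in; case: (@small_segments w).
  apply: (injects_of_onto (g := collapse)) => z zm.
  by apply: contrapT => zout; apply: all_in; exists z; split=> // [[v []]]; exists v.
have [z [zout zmin]] := wf_least (ex_intro _ z0 z0out).
have fresh_z : fresh_for (fun v (_ : R v w) => collapse v) z.
  split=> [[v [h e]]|z' z'z]; first by apply: zout; exists v.
  by apply: contrapT => z'out; apply: (zmin z' z'z) => -[v [h e]]; apply: z'out; exists v, h.
have [wout wbelow] : fresh_for (fun v (_ : R v w) => collapse v) (collapse w).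
  rewrite collapse_eq /collapse_step; case: pselect => [e|[]]; last by exists z.
  exact: proj2_sig (cid e).
split; last split.
- have /lteNlt zz0 : ~ lt z0 z by move/zmin.
  have /lteNlt wz : ~ lt z (collapse w).
    by move/wbelow => [v [h e]]; apply: zout; exists v.
  exact: lte_lt_trans wz (lte_lt_trans zz0 z0m).
- by move=> [v [h e]]; apply: wout; exists v, h.
- by move=> z' /wbelow [v [h e]]; exists v.
Qed.

Lemma collapse_lt w : lt (collapse w) m.
Proof. by case: (collapse_spec w). Qed.

Lemma collapse_down w z : lt z (collapse w) -> exists v, R v w /\ collapse v = z.
Proof. by case: (collapse_spec w) => _ [_]; apply. Qed.

Lemma collapse_mono v w : R v w -> lt (collapse v) (collapse w).
Proof.
move=> vw; have [_ [wout _]] := collapse_spec w.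
case: (lt_total (collapse v) (collapse w)) => [//|[e|/collapse_down [u [uv e]]]].
  by case: wout; exists v.
by case: wout; exists u; split=> //; apply: R_trans uv vw.
Qed.

Hypothesis R_total : forall v w, R v w \/ v = w \/ R w v.

Lemma collapse_inj : injective collapse.
Proof.
move=> v w e; case: (R_total v w) => [/collapse_mono|[//|/collapse_mono]];
  by rewrite e => /lt_irrefl.
Qed.

End Collapse.

(** * Hessenberg's theorem *)

Definition godel_lt (p q : K * K) :=
  lt (maxo p.1 p.2) (maxo q.1 q.2) \/
  maxo p.1 p.2 = maxo q.1 q.2 /\ (lt p.1 q.1 \/ p.1 = q.1 /\ lt p.2 q.2).

Lemma godel_wf : well_founded godel_lt.
Proof.
have acc M a b : maxo a b = M -> Acc godel_lt (a, b).
  elim/(well_founded_induction lt_wf): M => M IHM in a b *.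
  elim/(well_founded_induction lt_wf): a => a IHa in b *.
  elim/(well_founded_induction lt_wf): b => b IHb eM.
  constructor=> -[a' b']; rewrite /godel_lt /= => -[|[e [|[a'a b'b]]]].
  - by rewrite eM => /IHM; apply.
  - by move=> a'a; apply: (IHa a' a'a b'); rewrite e.
  - by rewrite a'a in e *; apply: (IHb b' b'b); rewrite e.
by move=> [a b]; apply: acc.
Qed.

Lemma godel_trans p q s : godel_lt p q -> godel_lt q s -> godel_lt p s.
Proof.
move=> [pq|[pq lex_pq]] [qs|[qs lex_qs]]; [left; exact: lt_trans pq qs|
  by left; rewrite -qs|by left; rewrite pq|right; split; first by rewrite pq].
case: lex_pq lex_qs => [p1q1|[-> p2q2]] [q1s1|[<- q2s2]]; [left; exact: lt_trans p1q1 q1s1|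
  by left|by left|by right; split=> //; apply: lt_trans p2q2 q2s2].
Qed.

Lemma godel_total p q : godel_lt p q \/ p = q \/ godel_lt q p.
Proof.
case: p q => [a b] [c d]; rewrite /godel_lt /=.
case: (lt_total (maxo a b) (maxo c d)) => [|[e|]]; [by left; left| |by right; right; left].
case: (lt_total a c) => [ac|[ac|ca]].
- by left; right; split=> //; left.
- subst c; case: (lt_total b d) => [bd|[<-|db]]; first by left; right; split=> //; right.
    by right; left.
  by right; right; right; split=> //; right.
- by right; right; right; split=> //; left.
Qed.

Lemma godel_bound p q : godel_lt p q ->
  lte p.1 (maxo q.1 q.2) /\ lte p.2 (maxo q.1 q.2).
Proof.
have pq_max : godel_lt p q -> lte (maxo p.1 p.2) (maxo q.1 q.2) by case=> [|[]]; [right|left].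
move=> /pq_max pq; split.
  exact: lte_trans (lte_maxl _ _) pq.
exact: lte_trans (lte_maxr _ _) pq.
Qed.

Definition pair_val m (v : ord m * ord m) : K * K := (proj1_sig v.1, proj1_sig v.2).

Lemma pair_val_inj m : injective (@pair_val m).
Proof. by move=> [u1 u2] [v1 v2] [/sig_val_inj -> /sig_val_inj ->]. Qed.

Lemma hessenberg m : infinite_type (ord m) -> injects (ord m * ord m) (ord m).
Proof.
elim/(well_founded_induction lt_wf): m => m IH infm.
case: (pselect (exists2 b, lt b m & injects (ord m) (ord b))) => [[b bm mb]|not_card].
  apply: injects_trans (injects_prod mb mb) _.
  apply: injects_trans (IH b bm (injects_trans infm mb)) _.
  by apply: injects_sub => x xb; apply: lt_trans xb bm.
have cardm : is_cardinal m by move=> b bm mb; apply: not_card; exists b.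
(* The Goedel segment below (a, b) lies in M x M for any M between max a b and m,
   so it is smaller than m by induction; collapsing then embeds m x m into m. *)
pose R v w := godel_lt (@pair_val m v) (@pair_val m w).
have R_wf : well_founded R by apply: wf_inverse_image godel_wf.
have R_trans u v w : R u v -> R v w -> R u w by apply: godel_trans.
have R_total v w : R v w \/ v = w \/ R w v.
  by case: (godel_total (pair_val v) (pair_val w)) => [|[/pair_val_inj|]]; auto.
have seg_small w : ~ injects (ord m) {v | R v w}.
  move=> mseg; have [M [wM Mm]] := cardinal_limit infm cardm
    (maxo_lt (proj2_sig w.1) (proj2_sig w.2)).
  have below_M v : R v w -> lt (pair_val v).1 M /\ lt (pair_val v).2 M.
    by move=> /godel_bound [v1w v2w]; split; apply: lte_lt_trans wM.
  have segM : injects {v | R v w} (ord M * ord M).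
    exists (fun v => (exist (below lt M) _ (proj1 (below_M _ (proj2_sig v))),
                      exist (below lt M) _ (proj2 (below_M _ (proj2_sig v))))).
    by move=> v v' [e1 e2]; apply/sig_val_inj/pair_val_inj; rewrite /pair_val e1 e2.
  have mM := injects_trans mseg segM.
  have infM : infinite_type (ord M) by case: (infinite_prod (injects_trans infm mM)).
  exact: cardm M Mm (injects_trans mM (IH M Mm infM)).
exists (fun w => exist (below lt m) _ (collapse_lt R_wf seg_small w)).
by move=> v w [/(collapse_inj R_trans seg_small R_total)].
Qed.

Lemma injects_below_of_card_lt lam (A : Type) : injects A (ord lam) -> ~ injects (ord lam) A ->
  exists2 g, lt g lam & injects A (ord g).
Proof.
move=> [f f_inj] lamA.
pose R u v := lt (proj1_sig (f u)) (proj1_sig (f v)).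
have R_wf : well_founded R by apply: wf_inverse_image lt_wf.
have R_trans u v w : R u v -> R v w -> R u w by apply: lt_trans.
have R_total u v : R u v \/ u = v \/ R v u.
  by case: (lt_total (proj1_sig (f u)) (proj1_sig (f v))) => [|[/sig_val_inj/f_inj|]]; auto.
have seg_small w : ~ injects (ord lam) {v | R v w}.
  by move=> /injects_trans /(_ (injects_val _)).
pose r := collapse lam R_wf.
have [g [glam g_out]] : exists g, lt g lam /\ forall u, r u <> g.
  apply: contrapT => all_hit; apply: lamA.
  apply: injects_trans (injects_of_onto (P := fun _ => True) (g := r) _) (injects_val _).
  move=> y ylam; apply: contrapT => y_out; apply: all_hit.
  by exists y; split=> // u ruy; apply: y_out; exists u.
exists g => //.
have r_below u : below lt g (r u).
  by case: (lt_total (r u) g) => [//|[/g_out//|/(collapse_down seg_small) [v [_ /g_out]]]].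
exists (fun u => exist (below lt g) _ (r_below u)).
by move=> u v [/(collapse_inj R_trans seg_small R_total)].
Qed.

Lemma prod_lt_cardinal lam d (T : Type) :
  infinite_type (ord lam) -> is_cardinal lam -> lt d lam ->
  injects T (ord lam) -> ~ injects (ord lam) T -> ~ injects (ord lam) (ord d * T).
Proof.
move=> inflam cardlam dlam Tlam lamT lamdT.
have [g glam Tg] := injects_below_of_card_lt Tlam lamT.
pose M := maxo d g.
have lamMM : injects (ord lam) (ord M * ord M).
  apply: injects_trans lamdT (injects_prod _ (injects_trans Tg _));
    apply: injects_sub => x xb.
  - exact: lt_lte_trans xb (lte_maxl d g).
  - exact: lt_lte_trans xb (lte_maxr d g).
have infM : infinite_type (ord M) by case: (infinite_prod (injects_trans inflam lamMM)).
exact: cardlam M (maxo_lt dlam glam) (injects_trans lamMM (hessenberg infM)).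
Qed.

(** * The cofinality argument *)

Lemma club_above (C : K -> Prop) (c : K) :
  club lt C -> club lt (fun a => C a /\ lt c a).
Proof.
move=> [C_unbounded C_closed]; split=> [d|a a_pos [a_ub a_sup]].
  have [b [Cb db]] := C_unbounded (maxo d c).
  exists b; split; [split=> //|]; apply: (lte_lt_trans _ db).
    exact: lte_maxr.
  exact: lte_maxl.
have [g ga] := a_pos; have [b [[[_ cb] ba] _]] := a_sup g ga.
split; last exact: (lt_trans cb ba).
apply: (C_closed a a_pos); split=> [b' [_ b'a] //|d da].
by have [b' [[[Cb' _] b'a] db']] := a_sup d da; exists b'.
Qed.

Section CofinalityArgument.
Variables (lam a : K) (Chi : Type) (F : K -> K -> K -> Prop).
Hypotheses (lam_inf : infinite_type (ord lam)) (lam_card : is_cardinal lam).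
Hypotheses (Chi_lam : injects Chi (ord lam)) (lam_Chi : ~ injects (ord lam) Chi).
Hypothesis lam_a : lt lam a.

Definition J_condition := forall f, regressive lt a f -> forall B, sup_eq lt B a ->
  exists i, lt i a /\ sup_eq lt (fun b => B b /\ F i b (f b)) a.

Section Witnesses.
Variables (X Y : K -> Prop) (q k e : K -> K) (mu : K) (iota : K -> K -> K -> Chi).
Hypotheses (X_cof : cofinal_in lt X a) (Y_cof : cofinal_in lt Y lam).
Hypothesis X_min : forall X', cofinal_in lt X' a -> injects {x | X x} {x | X' x}.
Hypothesis Y_min : forall Y', cofinal_in lt Y' lam -> injects {y | Y y} {y | Y' y}.
Hypotheses (q_Y : forall x, X x -> Y (q x))
  (q_inj : forall x x', X x -> X x' -> q x = q x' -> x = x')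
  (q_onto : forall y, Y y -> exists x, X x /\ q x = y).
Hypotheses (k_mu : forall x, X x -> below lt mu (k x))
  (k_inj : forall x x', X x -> X x' -> k x = k x' -> x = x')
  (mu_min : forall nu, lt nu mu -> ~ injects {x | X x} (ord nu)).
Hypotheses (e_lam : forall i, lt i a -> below lt lam (e i))
  (e_inj : forall i j, lt i a -> lt j a -> e i = e j -> i = j).
Hypothesis iota_inj :
  forall i b z z', F i b z -> F i b z' -> iota i b z = iota i b z' -> z = z'.

Lemma lam_limit y : lt y lam -> exists z, lt y z /\ lt z lam.
Proof. exact: (cardinal_limit lam_inf lam_card). Qed.

Lemma a_limit d : lt d a -> exists d', lt d d' /\ lt d' a.
Proof.
move=> da; apply: contrapT => no_d'.
have d_cof : cofinal_in lt (fun b => b = d) a.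
  split=> [b -> //|d' d'a]; exists d; split=> //.
  by case: (lt_total d' d) => [|[->|dd']]; [right|left|case: no_d'; exists d'].
have [g g_inj] := X_min d_cof.
have X_single x x' : X x -> X x' -> x = x'.
  move=> Xx Xx'; have : g (exist X x Xx) = g (exist X x' Xx').
    case: (g (exist X x Xx)) (g (exist X x' Xx')) => u ud [v vd].
    by apply: eq_exist; rewrite ud vd.
  by move=> /g_inj /(f_equal (@proj1_sig _ _)).
have [g0 _] := lam_inf; have [y0 [Yy0 _]] := Y_cof.2 _ (proj2_sig (g0 0%N)).
have [z [y0z zlam]] := lam_limit (Y_cof.1 _ Yy0).
have [y [Yy zy]] := Y_cof.2 _ zlam.
have [[x [Xx qx]] [x0 [Xx0 qx0]]] := (q_onto Yy, q_onto Yy0).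
rewrite -qx -qx0 (X_single x x0 Xx Xx0) in zy y0z.
exact: (lt_irrefl (lte_lt_trans zy y0z)).
Qed.

Lemma sup_X_above_lam : sup_eq lt (fun b => X b /\ lte lam b) a.
Proof.
split=> [b [Xb _]|d da]; first exact: X_cof.1 b Xb.
have [d2 [d'd2 d2a]] := a_limit (maxo_lt da lam_a).
have [b [Xb d2b]] := X_cof.2 d2 d2a.
have d'b := lt_lte_trans d'd2 d2b.
exists b; split; first split=> //; last exact: (lte_lt_trans (lte_maxl d lam) d'b).
by right; apply: (lte_lt_trans (lte_maxr d lam) d'b).
Qed.

Lemma q_bounded x : X x ->
  exists2 d, lt d lam & forall x', X x' -> lt (k x') (k x) -> lt (q x') d.
Proof.
move=> Xx; apply: contrapT => unbounded.
pose Z y := exists x', [/\ X x', lt (k x') (k x) & q x' = y].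
have Z_cof : cofinal_in lt Z lam.
  split=> [y [x' [Xx' _ <-]]|d dlam]; first exact: Y_cof.1 _ (q_Y Xx').
  apply: contrapT => d_above_Z; apply: unbounded; exists d => // x' Xx' kx'.
  apply: contrapT => /lteNlt dq; apply: d_above_Z.
  by exists (q x'); split=> //; exists x'.
apply: (mu_min (k_mu Xx)).
apply: injects_trans (injects_sig q_Y q_inj) _.
apply: injects_trans (Y_min Z_cof) _.
apply: injects_trans
  (injects_of_onto (P := fun x' => X x' /\ lt (k x') (k x)) (g := q) _) _.
  by move=> y [x' [Xx' kx' qx']]; exists x'.
by apply: (injects_sig (g := k)) => [x' []|x' x'' [Xx' _] [Xx'' _]]; last exact: k_inj.
Qed.

Definition early_index x i :=
  lt i a /\ exists x', [/\ X x', lt (k x') (k x) & lte (e i) (q x')].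

Lemma avoid_early x : X x -> lte lam x ->
  exists z, lt z x /\ forall i, early_index x i -> ~ F i x z.
Proof.
move=> Xx lamx; have [d dlam q_d] := q_bounded Xx.
apply: contrapT => covered.
have cover z : below lt lam z -> exists i, early_index x i /\ F i x z.
  move=> zlam; apply: contrapT => not_cov; apply: covered.
  by exists z; split=> [|i ei Fz]; [apply: lt_lte_trans zlam lamx|apply: not_cov; exists i].
have pick (z : ord lam) : {i | early_index x i /\ F i x (proj1_sig z)}.
  by apply: cid; apply: cover (proj2_sig z).
have e_d i : early_index x i -> below lt d (e i).
  by move=> [_ [x' [Xx' kx' ex']]]; apply: lte_lt_trans ex' (q_d x' Xx' kx').
apply: (prod_lt_cardinal lam_inf lam_card dlam Chi_lam lam_Chi).
exists (fun z => (exist (below lt d) _ (e_d _ (proj1 (proj2_sig (pick z)))),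
                  iota (proj1_sig (pick z)) x (proj1_sig z))) => z z' [].
case: (pick z) (pick z') => i [[ia _] Fi] [i' [[i'a _] Fi']] /= /(e_inj ia i'a) ii'.
by rewrite ii' in Fi *; move/(iota_inj Fi Fi') /sig_val_inj.
Qed.

Lemma regressive_avoiding : exists f, regressive lt a f /\
  forall b, X b -> lte lam b -> forall i, early_index b i -> ~ F i b (f b).
Proof.
have choose b : exists z, [/\ lte z b, (exists g, lt g b) -> lt z b &
    X b -> lte lam b -> forall i, early_index b i -> ~ F i b z].
  case: (pselect (X b /\ lte lam b)) => [[Xb lamb]|not_B].
    by have [z [zb avoid]] := avoid_early Xb lamb; exists z; split=> //; right.
  case: (pselect (exists g, lt g b)) => [[g gb]|no_g].
    by exists g; split=> // [|Xb lamb]; [right|case: not_B].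
  by exists b; split=> // [|Xb lamb]; [left|case: not_B].
have [f fP] := choice choose.
exists f; split; [split=> b ba|by move=> b; case: (fP b)].
  by case: (fP b) => fb _ _; apply: lte_lt_trans fb ba.
by case: (fP b) => _ + _; apply.
Qed.

Lemma two_above i : lt i a ->
  exists x0 x1, [/\ X x0, X x1, lte (e i) (q x0) & lt (k x0) (k x1)].
Proof.
move=> ia; have [y0 [Yy0 ey0]] := Y_cof.2 _ (e_lam ia).
have [z [y0z zlam]] := lam_limit (Y_cof.1 _ Yy0).
have [y1 [Yy1 zy1]] := Y_cof.2 _ zlam.
have y0y1 := lt_lte_trans y0z zy1.
have [[x0 [Xx0 qx0]] [x1 [Xx1 qx1]]] := (q_onto Yy0, q_onto Yy1).
case: (lt_total (k x0) (k x1)) => [k01|[/(k_inj Xx0 Xx1) x01|k10]].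
- by exists x0, x1; rewrite qx0.
- by move: y0y1; rewrite -qx0 -qx1 x01 => /lt_irrefl.
- exists x1, x0; split=> //; rewrite qx1.
  exact: lte_trans ey0 (or_intror y0y1).
Qed.

Lemma J_condition_fails : ~ J_condition.
Proof.
move=> J; have [f [f_reg f_avoid]] := regressive_avoiding.
have [i [ia [_ H_sup]]] := J f f_reg _ sup_X_above_lam.
have [x0 [x1 [Xx0 Xx1 ex0 k01]]] := two_above ia.
pose H b := (X b /\ lte lam b) /\ F i b (f b).
have H_early b : H b -> lt (k b) (k x1).
  move=> [[Xb lamb] Fb]; apply: contrapT => /lteNlt k1b.
  apply: (f_avoid b Xb lamb i) Fb; split=> //.
  by exists x0; split=> //; apply: lt_lte_trans k01 k1b.
have H_cof : cofinal_in lt H a.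
  split=> [b [[Xb _] _]|d da]; first exact: X_cof.1 b Xb.
  by have [b [Hb db]] := H_sup d da; exists b; split=> //; right.
apply: (mu_min (k_mu Xx1)); apply: injects_trans (X_min H_cof) _.
apply: (injects_sig (g := k)) => [b /H_early //|b b' [[Xb _] _] [[Xb' _] _]].
exact: k_inj.
Qed.

End Witnesses.

Variable c0 : Chi.
Hypotheses (a_lam : injects (ord a) (ord lam))
  (F_small : forall i b, card_lt {x | F i b x} Chi).

Lemma E_cf_J_condition_fails : E_cf lt lam a -> ~ J_condition.
Proof.
move=> [X [Y [X_cof [Y_cof [X_min [Y_min XY]]]]]].
have [q [q_Y q_inj q_onto]] := equinum_sigP lam XY.
have [e [e_lam e_inj]] := injects_sigP lam a_lam.
have [mu [X_mu mu_min]] :=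
  wf_least (ex_intro (fun mu => injects {x | X x} (ord mu)) a (injects_sub X_cof.1)).
have [k [k_mu k_inj]] := injects_sigP lam X_mu.
have iota_ex (p : K * K) : exists g : K -> Chi,
    forall z z', F p.1 p.2 z -> F p.1 p.2 z' -> g z = g z' -> z = z'.
  have [f f_inj] := (F_small p.1 p.2).1; have [g gE] := sig_fun_extension c0 f.
  by exists g => z z' Fz Fz'; rewrite (gE z Fz) (gE z' Fz') => /f_inj [].
have [iota iota_inj] := choice iota_ex.
exact: (J_condition_fails (iota := fun i b => iota (i, b)) X_cof Y_cof X_min Y_min
  q_Y q_inj q_onto k_mu k_inj mu_min e_lam e_inj (fun i b => iota_inj (i, b))).
Qed.

End CofinalityArgument.
End WellOrder.

Theorem proposition3p3
  (K : Type) (lt : K -> K -> Prop) (lam : K) (Chi : Type)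
  (Hwo : strict_well_order lt)
  (* lam is an infinite cardinal (as an ordinal below kappa) *)
  (Hlam_inf : infinite_type {x | below lt lam x})
  (Hlam_card : forall b, lt b lam -> ~ injects {x | below lt lam x} {x | below lt b x})
  (* K has order type lam^+ *)
  (Hsucc1 : forall a, injects {x | below lt a x} {x | below lt lam x})
  (Hsucc2 : ~ injects K {x | below lt lam x})
  (* chi = |Chi| is 2 or an infinite cardinal, and chi < lam *)
  (Hchi : (exists c1 c2 : Chi, c1 <> c2 /\ forall c, c = c1 \/ c = c2) \/ infinite_type Chi)
  (Hchi_lt : card_lt Chi {x | below lt lam x})
  (S : K -> Prop) (HS : in_J lt Chi S) :
  nonstationary lt (fun a => S a /\ E_cf lt lam a).
Proof.
have [c0 _] : exists c : Chi, True.
  by case: Hchi => [[c _]|[g _]]; [exists c|exists (g 0%N)].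
case: HS => C [F [C_club [F_small C_J]]].
exists (fun a => C a /\ lt lam a); split; first exact: club_above.
move=> a [[Ca lam_a] [Sa Ea]].
exact: (E_cf_J_condition_fails Hwo Hlam_inf Hlam_card Hchi_lt.1 Hchi_lt.2 lam_a c0 (Hsucc1 a)
  F_small Ea (C_J a Sa Ca)).
Qed.
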